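(* Let $\mathcal H_S,\mathcal H_E$ be finite-dimensional Hilbert spaces, $|\psi_i\rangle\in\mathcal H_S$ and $|\phi_i^E\rangle\in\mathcal H_E$ unit vectors, $x\mapsto U_x^{SE}$ a continuously differentiable family of unitaries on $\mathcal H_S\otimes\mathcal H_E$, and $\{|\pi_\omega^E\rangle\}_{\omega\in\Omega}$ an orthonormal basis of $\mathcal H_E$, with $\Omega$ partitioned into a retained set $\checkmark$ and a discarded set $\times$. Assume the perpendicular gauge condition $\langle \Psi_x^{SE}|\partial_x\Psi_x^{SE}\rangle=0$. Suppose that (i) $\langle\tilde\psi_{x|\omega}|\partial_x\tilde\psi_{x|\omega}\rangle=0$ for all $\omega\in\checkmark$; (ii) $|\partial_x\tilde\psi_{x|\omega}\rangle=0$ for all $\omega\in\times$; and that $p(\omega|x)>0$ for every $\omega\in\checkmark$ with $|\partial_x\tilde\psi_{x|\omega}\rangle\neq0$. Then the measurement encoding is lossless, i.e. $$\sum_{\omega\in\checkmark,\ p(\omega|x)>0} p(\omega|x)\,I(\sigma_{x|\omega}) = I(|\Psi_x^{SE}\rangle).$$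
   Context: Setup: $|\Psi_x^{SE}\rangle=U_x^{SE}(|\psi_i\rangle\otimes|\phi_i^E\rangle)$. Kraus (measurement) operators on $\mathcal H_S$: $M_{\omega,x}=\langle\pi_\omega^E|U_x^{SE}|\phi_i^E\rangle$ (partial inner product over the environment). $|\tilde\psi_{x|\omega}\rangle=M_{\omega,x}|\psi_i\rangle$, $p(\omega|x)=\langle\tilde\psi_{x|\omega}|\tilde\psi_{x|\omega}\rangle$, and for $p(\omega|x)>0$ the post-selected state is the pure state $\sigma_{x|\omega}=|\tilde\psi_{x|\omega}\rangle\langle\tilde\psi_{x|\omega}|/p(\omega|x)$. For a pure state $|\phi_x\rangle$ (normalized), the quantum Fisher information is $I(|\phi_x\rangle)=4(\langle\partial_x\phi_x|\partial_x\phi_x\rangle-|\langle\phi_x|\partial_x\phi_x\rangle|^2)$; $I(\sigma_{x|\omega})$ is the QFI of the normalized pure state $\tilde\psi_{x|\omega}/\sqrt{p(\omega|x)}$. $I^Q:=I(|\Psi_x^{SE}\rangle)$. *)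

(* Finite-dimensional Hilbert spaces are modelled
   as C^S, C^E for finite index (basis) types S, E; vectors are functions
   S -> R[i], operators are matrices given as functions I -> I -> R[i]. *)
From mathcomp Require Import all_boot all_algebra all_classical all_reals all_analysis.
From mathcomp.real_closed Require Import complex.
Import numFieldNormedType.Exports.
Set Implicit Arguments. Unset Strict Implicit. Unset Printing Implicit Defensive.
Import GRing.Theory Num.Theory.
Local Open Scope ring_scope.
Local Open Scope complex_scope.

Section QDefs.
Variable R : realType.

Definition cdot (I : finType) (u v : I -> R[i]) : R[i] :=
  \sum_(i : I) conjc (u i) * v i.

Definition abs2 (z : R[i]) : R := complex.Re z ^+ 2 + complex.Im z ^+ 2.

Definition cderiv (I : finType) (f : R -> I -> R[i]) (x : R) : I -> R[i] :=
  fun i => (derive1 (fun t => complex.Re (f t i)) x) +i* (derive1 (fun t => complex.Im (f t i)) x).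

Definition QFI_pure (I : finType) (f : R -> I -> R[i]) (x : R) : R :=
  4 * (complex.Re (cdot (cderiv f x) (cderiv f x)) - abs2 (cdot (f x) (cderiv f x))).

Definition unitary_op (I : finType) (M : I -> I -> R[i]) : Prop :=
  forall a b : I, \sum_(k : I) conjc (M k a) * M k b = (a == b)%:R.

Definition onb_family (O E : finType) (pi : O -> E -> R[i]) : Prop :=
  (forall w w' : O, cdot (pi w) (pi w') = (w == w')%:R) /\
  (forall v : E -> R[i], exists c : O -> R[i],
      forall e : E, v e = \sum_(w : O) c w * pi w e).

Definition C1_family (I : finType) (U : R -> I -> I -> R[i]) : Prop :=
  forall a b : I,
    (forall t : R, derivable (fun s => complex.Re (U s a b)) t 1) /\
    continuous (derive1 (fun s => complex.Re (U s a b)) : R -> R) /\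
    (forall t : R, derivable (fun s => complex.Im (U s a b)) t 1) /\
    continuous (derive1 (fun s => complex.Im (U s a b)) : R -> R).

Variables (S E O : finType).

Definition joint_state (U : R -> S * E -> S * E -> R[i]) (psi : S -> R[i])
  (phi : E -> R[i]) : R -> S * E -> R[i] :=
  fun x a => \sum_(b : S * E) U x a b * (psi b.1 * phi b.2).

(* Kraus operator M_{w,x} = <pi_w| U_x |phi> (partial inner product) *)
Definition kraus (U : R -> S * E -> S * E -> R[i]) (phi : E -> R[i])
  (pi : O -> E -> R[i]) (w : O) (x : R) : S -> S -> R[i] :=
  fun s s' => \sum_(e : E) \sum_(e' : E) conjc (pi w e) * U x (s, e) (s', e') * phi e'.

Definition post_state U psi phi pi (w : O) : R -> S -> R[i] :=
  fun x s => \sum_(s' : S) kraus U phi pi w x s s' * psi s'.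

Definition prob U psi phi pi (w : O) (x : R) : R :=
  complex.Re (cdot (post_state U psi phi pi w x) (post_state U psi phi pi w x)).

Definition normalized_post U psi phi pi (w : O) : R -> S -> R[i] :=
  fun x s => post_state U psi phi pi w x s *
             ((Num.sqrt (prob U psi phi pi w x))^-1)%:C.

End QDefs.

From mathcomp Require Import all_boot all_algebra all_classical all_reals all_analysis.
From mathcomp.real_closed Require Import complex.
From mathcomp Require Import lra ring.
Import numFieldNormedType.Exports.
Import order.Order.TTheory GRing.Theory Num.Theory.
Local Open Scope ring_scope.
Local Open Scope complex_scope.

Set Implicit Arguments.
Unset Strict Implicit.
Unset Printing Implicit Defensive.

(* Write |Psi'> for the derivative of the joint state.  The post-measurement
   states are partial inner products <pi_w|Psi>, so their derivatives are the
   partial inner products <pi_w|Psi'>, and Parseval's identity for the basis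
   pi gives sum_w <psi_w'|psi_w'> = <Psi'|Psi'>.  Under the gauge conditions
   both kinds of QFI lose their |<f|f'>|^2 term, and for a retained outcome
   the normalization 1/sqrt(p) is stationary (p' = 2 Re <psi_w|psi_w'> = 0),
   so p I(sigma_w) = 4 <psi_w'|psi_w'>.  Outcomes left out of the sum have
   psi_w' = 0 and contribute nothing to the Parseval sum. *)

Section ComplexDerivative.
Variable R : realType.

Lemma ReD (a b : R[i]) : complex.Re (a + b) = complex.Re a + complex.Re b.
Proof. by case: a b => ? ? [? ?]. Qed.

Lemma ImD (a b : R[i]) : complex.Im (a + b) = complex.Im a + complex.Im b.
Proof. by case: a b => ? ? [? ?]. Qed.

Lemma ReM (a b : R[i]) :
  complex.Re (a * b) = complex.Re a * complex.Re b - complex.Im a * complex.Im b.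
Proof. by case: a b => ? ? [? ?]. Qed.

Lemma ImM (a b : R[i]) :
  complex.Im (a * b) = complex.Re a * complex.Im b + complex.Im a * complex.Re b.
Proof. by case: a b => ? ? [? ?]. Qed.

Definition is_cderive (f : R -> R[i]) (x : R) (d : R[i]) : Prop :=
  is_derive x 1 (fun t => complex.Re (f t)) (complex.Re d) /\
  is_derive x 1 (fun t => complex.Im (f t)) (complex.Im d).

Lemma cderiv_eq (I : finType) (F : R -> I -> R[i]) (x : R) (D : I -> R[i]) :
  (forall i, is_cderive (fun t => F t i) x (D i)) -> cderiv F x = D.
Proof.
move=> dF; apply/funext => i; have [[_ dRe] [_ dIm]] := dF i.
by rewrite /cderiv !derive1E dRe dIm; case: (D i).
Qed.

Lemma is_cderive_cderiv (I : finType) (F : R -> I -> R[i]) (x : R) (D : I -> R[i]) :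
  (forall i, is_cderive (fun t => F t i) x (D i)) ->
  forall i, is_cderive (fun t => F t i) x (cderiv F x i).
Proof. by move=> dF; rewrite (cderiv_eq dF). Qed.

Lemma is_cderive_cst (c : R[i]) (x : R) : is_cderive (fun=> c) x 0.
Proof. by split; exact: is_derive_cst. Qed.

Lemma is_cderive_real (h : R -> R) (x dh : R) :
  is_derive x 1 h dh -> is_cderive (fun t => (h t)%:C) x dh%:C.
Proof. by split; last exact: is_derive_cst. Qed.

Lemma is_cderiveD f g x d e : is_cderive f x d -> is_cderive g x e ->
  is_cderive (fun t => f t + g t) x (d + e).
Proof.
case=> dfRe dfIm [dgRe dgIm]; split.
- have -> : (fun t => complex.Re (f t + g t)) =
            (fun t => complex.Re (f t)) + (fun t => complex.Re (g t)).
    by apply/funext => t; rewrite ReD.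
  by rewrite ReD; exact: is_deriveD.
- have -> : (fun t => complex.Im (f t + g t)) =
            (fun t => complex.Im (f t)) + (fun t => complex.Im (g t)).
    by apply/funext => t; rewrite ImD.
  by rewrite ImD; exact: is_deriveD.
Qed.

Lemma is_cderive_sum (J : Type) (r : seq J) (F : J -> R -> R[i]) (D : J -> R[i]) x :
  (forall j, is_cderive (F j) x (D j)) ->
  is_cderive (fun t => \sum_(j <- r) F j t) x (\sum_(j <- r) D j).
Proof.
move=> dF; elim: r => [|j r IHr].
  under eq_fun do rewrite big_nil.
  by rewrite big_nil; exact: is_cderive_cst.
under eq_fun do rewrite big_cons.
by rewrite big_cons; exact: is_cderiveD.
Qed.

Lemma is_cderiveM f g x d e : is_cderive f x d -> is_cderive g x e ->
  is_cderive (fun t => f t * g t) x (f x * e + d * g x).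
Proof.
case=> dfRe dfIm [dgRe dgIm]; split.
- have -> : (fun t => complex.Re (f t * g t)) =
     (fun t => complex.Re (f t)) * (fun t => complex.Re (g t)) -
     (fun t => complex.Im (f t)) * (fun t => complex.Im (g t)).
    by apply/funext => t; rewrite ReM.
  apply: is_derive_eq (is_deriveB (is_deriveM dfRe dgRe) (is_deriveM dfIm dgIm)) _.
  by rewrite ReD !ReM /GRing.scale /=; lra.
- have -> : (fun t => complex.Im (f t * g t)) =
     (fun t => complex.Re (f t)) * (fun t => complex.Im (g t)) +
     (fun t => complex.Im (f t)) * (fun t => complex.Re (g t)).
    by apply/funext => t; rewrite ImM.
  apply: is_derive_eq (is_deriveD (is_deriveM dfRe dgIm) (is_deriveM dfIm dgRe)) _.
  by rewrite ImD !ImM /GRing.scale /=; lra.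
Qed.

Lemma is_cderiveMr f x d (c : R[i]) :
  is_cderive f x d -> is_cderive (fun t => f t * c) x (d * c).
Proof. by move=> df; have := is_cderiveM df (is_cderive_cst c x); rewrite mulr0 add0r. Qed.

Lemma is_cderiveMl f x d (c : R[i]) :
  is_cderive f x d -> is_cderive (fun t => c * f t) x (c * d).
Proof. by move=> df; have := is_cderiveM (is_cderive_cst c x) df; rewrite mul0r addr0. Qed.

Lemma is_cderiveJ f x d : is_cderive f x d -> is_cderive (fun t => (f t)^*) x d^*.
Proof.
case: d => a b [/= dRe dIm]; split => /=.
- have -> : (fun t => complex.Re (f t)^*) = (fun t => complex.Re (f t)).
    by apply/funext => t; case: (f t).
  exact: dRe.
- have -> : (fun t => complex.Im (f t)^*) = - (fun t => complex.Im (f t)).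
    by apply/funext => t; rewrite -[RHS]/(- complex.Im (f t)); case: (f t).
  exact: is_deriveN.
Qed.

End ComplexDerivative.

Section InnerProduct.
Variable R : realType.

Lemma cdotC (I : finType) (u v : I -> R[i]) : (cdot u v)^* = cdot v u.
Proof.
rewrite /cdot rmorph_sum; apply: eq_bigr => i _.
by rewrite rmorphM /= conjcK mulrC.
Qed.

Lemma cdot_sumr (I J : finType) (u : I -> R[i]) (c : J -> R[i]) (B : J -> I -> R[i]) :
  cdot u (fun i => \sum_j c j * B j i) = \sum_j c j * cdot u (B j).
Proof.
rewrite /cdot; under eq_bigr do rewrite mulr_sumr.
rewrite exchange_big; apply: eq_bigr => j _; rewrite mulr_sumr.
by apply: eq_bigr => i _; ring.
Qed.

Lemma cdot_scale (I : finType) (u v : I -> R[i]) (a b : R) :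
  cdot (fun i => u i * a%:C) (fun i => v i * b%:C) = (a * b)%:C * cdot u v.
Proof.
rewrite /cdot mulr_sumr; apply: eq_bigr => i _.
by rewrite rmorphM /= oppr0 complexr0 rmorphM; ring.
Qed.

Lemma cdot0r (I : finType) (u : I -> R[i]) : cdot u (fun=> 0) = 0.
Proof. by rewrite /cdot big1 // => i _; rewrite mulr0. Qed.

Lemma parseval (O E : finType) (pi : O -> E -> R[i]) (v : E -> R[i]) :
  onb_family pi -> \sum_w (cdot (pi w) v)^* * cdot (pi w) v = cdot v v.
Proof.
case=> orth span; have [c vE] := span v.
have {}vE : v = fun e => \sum_w c w * pi w e by apply/funext.
have coordE w : cdot (pi w) v = c w.
  rewrite vE cdot_sumr; under eq_bigr do rewrite orth.
  rewrite (bigD1 w) //= eqxx mulr1 big1 ?addr0 // => w' w'w.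
  by rewrite eq_sym (negbTE w'w) mulr0.
rewrite [in RHS](congr1 (cdot v) vE) cdot_sumr; apply: eq_bigr => w _.
by rewrite coordE -cdotC coordE mulrC.
Qed.

Definition partial_cdot (S E : finType) (v : E -> R[i]) (V : S * E -> R[i]) : S -> R[i] :=
  fun s => cdot v (fun e => V (s, e)).

Lemma parseval_partial (S E O : finType) (pi : O -> E -> R[i]) (V : S * E -> R[i]) :
  onb_family pi ->
  \sum_w cdot (partial_cdot (pi w) V) (partial_cdot (pi w) V) = cdot V V.
Proof.
move=> onb; rewrite [LHS]exchange_big /=.
under eq_bigr do rewrite parseval //.
by rewrite [RHS]/cdot pair_big; apply: eq_bigr => -[].
Qed.

Lemma is_cderive_partial_cdot (S E : finType) (V : R -> S * E -> R[i])
    (D : S * E -> R[i]) (v : E -> R[i]) (x : R) :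
  (forall a, is_cderive (fun t => V t a) x (D a)) ->
  forall s, is_cderive (fun t => partial_cdot v (V t) s) x (partial_cdot v D s).
Proof. by move=> dV s; apply: is_cderive_sum => e; exact: is_cderiveMl. Qed.

End InnerProduct.

Section QuantumFisherInformation.
Variable R : realType.

Lemma is_cderive_cdot (I : finType) (f g : R -> I -> R[i]) (x : R) (Df Dg : I -> R[i]) :
  (forall i, is_cderive (fun t => f t i) x (Df i)) ->
  (forall i, is_cderive (fun t => g t i) x (Dg i)) ->
  is_cderive (fun t => cdot (f t) (g t)) x (cdot (f x) Dg + cdot Df (g x)).
Proof.
move=> df dg; rewrite /cdot -big_split /=.
by apply: is_cderive_sum => i; exact: is_cderiveM (is_cderiveJ (df i)) (dg i).
Qed.

Lemma is_derive_inv_sqrt (p : R -> R) (x : R) :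
  0 < p x -> is_derive x 1 p 0 -> is_derive x 1 (fun t => (Num.sqrt (p t))^-1) 0.
Proof.
move=> px dp; have sqrt_p : is_derive x 1 (Num.sqrt \o p) 0.
  apply: is_derive_eq; first exact: is_derive1_comp (is_derive1_sqrt px) dp.
  by rewrite mulr0.
have sqrt_px : Num.sqrt (p x) != 0 by rewrite lt0r_neq0 // sqrtr_gt0.
by have := @is_deriveV _ (Num.sqrt \o p) x 0 1 sqrt_px sqrt_p; rewrite scaler0.
Qed.

Lemma QFI_pure_gauge (I : finType) (F : R -> I -> R[i]) (x : R) :
  cdot (F x) (cderiv F x) = 0 ->
  QFI_pure F x = 4 * complex.Re (cdot (cderiv F x) (cderiv F x)).
Proof. by move=> gauge; rewrite /QFI_pure gauge /abs2 /= expr2 mulr0 addr0 subr0. Qed.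

Lemma QFI_pure_normalized (I : finType) (f : R -> I -> R[i]) (x : R) (D : I -> R[i]) :
  (forall i, is_cderive (fun t => f t i) x (D i)) ->
  cdot (f x) D = 0 ->
  let p t := complex.Re (cdot (f t) (f t)) in
  0 < p x ->
  p x * QFI_pure (fun t i => f t i * ((Num.sqrt (p t))^-1)%:C) x
  = 4 * complex.Re (cdot D D).
Proof.
move=> df gauge p px.
have dp : is_derive x 1 p 0.
  have [dRe _] := is_cderive_cdot df df.
  by move: dRe; rewrite -[cdot D _]cdotC gauge conjc0 addr0.
set h := fun t => (Num.sqrt (p t))^-1.
have dnormalized : cderiv (fun t i => f t i * (h t)%:C) x = fun i => D i * (h x)%:C.
  apply: cderiv_eq => i.
  have := is_cderiveM (df i) (is_cderive_real (is_derive_inv_sqrt px dp)).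
  by rewrite mulr0 add0r.
rewrite QFI_pure_gauge dnormalized cdot_scale ?gauge ?mulr0 //.
have -> : h x * h x = (p x)^-1.
  by rewrite -invfM -expr2 sqr_sqrtr // ltW.
rewrite ReM /= mul0r subr0; field; exact: lt0r_neq0.
Qed.

End QuantumFisherInformation.

Section Measurement.
Variables (R : realType) (S E O : finType).
Variables (U : R -> S * E -> S * E -> R[i]) (psi : S -> R[i]) (phi : E -> R[i]).
Variable pi : O -> E -> R[i].

Lemma post_stateE w t :
  post_state U psi phi pi w t = partial_cdot (pi w) (joint_state U psi phi t).
Proof.
apply/funext => s; rewrite /post_state /kraus /partial_cdot /cdot /joint_state.
transitivity (\sum_e \sum_s' \sum_e'
    (pi w e)^* * U t (s, e) (s', e') * phi e' * psi s').
  under eq_bigr do rewrite mulr_suml.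
  under eq_bigr do under eq_bigr do rewrite mulr_suml.
  by rewrite exchange_big.
apply: eq_bigr => e _; rewrite mulr_sumr pair_big_dep.
by apply: eq_bigr => -[s' e'] _ /=; ring.
Qed.

Lemma is_cderive_entry x a b : C1_family U ->
  is_cderive (fun t => U t a b) x (cderiv (fun t => U t a) x b).
Proof.
move=> /(_ a b) [dRe [_ [dIm _]]].
by split; rewrite /= derive1E; exact: derivableP.
Qed.

Lemma is_cderive_joint_state x a : C1_family U ->
  is_cderive (fun t => joint_state U psi phi t a) x (cderiv (joint_state U psi phi) x a).
Proof.
move=> C1U; apply: is_cderive_cderiv a => a; apply: is_cderive_sum => b.
exact/is_cderiveMr/is_cderive_entry.
Qed.

Lemma is_cderive_post_state w x s : C1_family U ->
  is_cderive (fun t => post_state U psi phi pi w t s) x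
    (partial_cdot (pi w) (cderiv (joint_state U psi phi) x) s).
Proof.
move=> C1U; under eq_fun do rewrite post_stateE.
by apply: is_cderive_partial_cdot => a; exact: is_cderive_joint_state.
Qed.

Lemma cderiv_post_state w x : C1_family U ->
  cderiv (post_state U psi phi pi w) x =
  partial_cdot (pi w) (cderiv (joint_state U psi phi) x).
Proof. by move=> C1U; apply: cderiv_eq => s; exact: is_cderive_post_state. Qed.

End Measurement.

Theorem theorem1 (R : realType) (S E O : finType)
  (psi : S -> R[i]) (phi : E -> R[i])
  (U : R -> S * E -> S * E -> R[i]) (pi : O -> E -> R[i])
  (keep : {set O}) (x : R) :
  cdot psi psi = 1 ->
  cdot phi phi = 1 ->
  (forall t : R, unitary_op (U t)) ->
  C1_family U ->
  onb_family pi ->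
  (* perpendicular gauge *)
  cdot (joint_state U psi phi x) (cderiv (joint_state U psi phi) x) = 0 ->
  (* (i) *)
  (forall w : O, w \in keep ->
     cdot (post_state U psi phi pi w x) (cderiv (post_state U psi phi pi w) x) = 0) ->
  (* (ii) *)
  (forall w : O, w \notin keep ->
     forall s : S, cderiv (post_state U psi phi pi w) x s = 0) ->
  (forall w : O, w \in keep ->
     (exists s : S, cderiv (post_state U psi phi pi w) x s <> 0) ->
     0 < prob U psi phi pi w x) ->
  \sum_(w in keep | 0 < prob U psi phi pi w x)
      prob U psi phi pi w x * QFI_pure (normalized_post U psi phi pi w) x
  = QFI_pure (joint_state U psi phi) x.
Proof.
move=> _ _ _ C1U onb gauge gauge_kept static_discarded pos_kept.
set dPsi := cderiv (joint_state U psi phi) x.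
have static_dropped w : ~~ ((w \in keep) && (0 < prob U psi phi pi w x)) ->
    cderiv (post_state U psi phi pi w) x = fun=> 0.
  move=> dropped; apply/funext => s.
  case: (boolP (w \in keep)) dropped => [kw /= pw | nkw _]; last exact: static_discarded.
  by apply: contra_notP (negP pw) => ds; exact: (pos_kept w kw (ex_intro _ s ds)).
rewrite [RHS]QFI_pure_gauge // -(parseval_partial dPsi onb) raddf_sum mulr_sumr.
rewrite -(@big_rmcond _ _ _ _ _ (fun w => (w \in keep) && (0 < prob U psi phi pi w x))) /=.
  apply: eq_bigr => w /andP[kw pw]; rewrite -cderiv_post_state //.
  apply: QFI_pure_normalized pw => [s|]; last exact: gauge_kept.
  by rewrite cderiv_post_state //; exact: is_cderive_post_state.
by move=> w /static_dropped dw; rewrite -cderiv_post_state // dw cdot0r mulr0.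
Qed.
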